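(* Let $n\ge1$, let \[P^n=\Big\{x\in[0,4]^n:\sum_{i\in S}x_i+\sum_{i\notin S}(4-x_i)\ge\tfrac12\ \ \forall S\subseteq\{1,\dots,n\}\Big\},\] and let $\mathcal{B}=(B^{o}(4),\dots,B^{o}(4))$ ($n$ copies), where \[B^{o}(u)=\Big\{(x,z)\in\mathbb{R}\times[0,1]^u: x=uz_u+\sum_{j=1}^{u-1}z_j,\ 0\le z_{u-1}\le\dots\le z_1\le1,\ z_1+z_u\le1\Big\}.\] Let $P^n_{\mathcal{B}}=\{(x,z)\in\mathbb{R}^n\times\mathbb{R}^{4n}: x\in P^n,\ (x_i,z_i)\in B^o(4)\text{ for } i=1,\dots,n\}$, with all variables $x$ and $z$ integer. Then there exists a complete branch-and-bound tree with respect to $P^n_{\mathcal{B}}$ having $2^n+n$ leaf nodes.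
   Context: Branch-and-bound (B&B) trees: for a polyhedron $Q$ and its set of integer points $Q^{\mathrm{int}}$ (points of $Q$ whose integer-designated coordinates are integral), a B&B tree is a rooted binary tree whose nodes are labeled by polyhedra: the root is labeled by a box (polyhedron) containing $Q$, and each non-leaf node labeled $D'$ has exactly two children labeled $D'\cap\{y:y_i\le t\}$ and $D'\cap\{y:y_i\ge t+1\}$ for some integer-designated variable $y_i$ and some $t\in\mathbb{Z}$. The tree is complete with respect to $Q$ if $\mathrm{conv}(Q^{\mathrm{int}})=\mathrm{conv}\big(\bigcup_{N\text{ leaf}}(N\cap Q)\big)$. The size of the tree is its number of leaf nodes. *)

From HB Require Import structures.
From mathcomp Require Import all_boot all_order all_algebra.
From mathcomp Require Import boolp classical_sets reals.
Set Implicit Arguments.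
Unset Strict Implicit.
Unset Printing Implicit Defensive.
Import Order.TTheory GRing.Theory Num.Theory.
Local Open Scope classical_set_scope.
Local Open Scope ring_scope.

(* A node branches on variable i with threshold t : int into
   D /\ {y_i <= t} (left child) and D /\ {y_i >= t+1} (right child). *)
Inductive bbtree (I : Type) :=
| BBLeaf
| BBNode of I & int & bbtree I & bbtree I.
Arguments BBLeaf {I}.

Fixpoint bb_leaves (R : realType) (I : Type) (D : set (I -> R)) (T : bbtree I)
  : seq (set (I -> R)) :=
  match T with
  | BBLeaf => [:: D]
  | BBNode i t l r =>
      bb_leaves (D `&` [set y | y i <= t%:~R]) l
      ++ bb_leaves (D `&` [set y | (t + 1)%:~R <= y i]) r
  end.

Definition bb_size (R : realType) (I : Type) (D : set (I -> R)) (T : bbtree I) : nat :=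
  size (bb_leaves D T).

Definition is_box (R : realType) (I : Type) (D : set (I -> R)) : Prop :=
  exists l u : I -> R, D = [set y | forall i, l i <= y i <= u i].

Definition conv (R : realType) (I : Type) (S : set (I -> R)) : set (I -> R) :=
  [set y | exists (m : nat) (p : 'I_m -> I -> R) (w : 'I_m -> R),
      (forall k, S (p k)) /\ (forall k, 0 <= w k) /\ \sum_(k < m) w k = 1 /\
      (forall i, y i = \sum_(k < m) w k * p k i)].

Definition int_points (R : realType) (I : Type) (Q : set (I -> R)) : set (I -> R) :=
  [set y | Q y /\ forall i, exists z : int, y i = z%:~R].

Definition leaves_cap (R : realType) (I : Type) (L : seq (set (I -> R)))
  (Q : set (I -> R)) : set (I -> R) :=
  [set y | exists2 k, (k < size L)%N & (nth set0 L k `&` Q) y].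

Definition complete_bbtree (R : realType) (I : Type) (Q D : set (I -> R))
  (T : bbtree I) : Prop :=
  is_box D /\ Q `<=` D /\
  conv (int_points Q) = conv (leaves_cap (bb_leaves D T) Q).

(* B^o(u): z is 1-indexed (z 1, ..., z u). *)
Definition Bo (R : realType) (u : nat) (x : R) (z : nat -> R) : Prop :=
  (forall j, (1 <= j <= u)%N -> 0 <= z j <= 1) /\
  x = u%:R * z u + \sum_(1 <= j < u) z j /\
  0 <= z u.-1 /\
  (forall j, (1 <= j)%N -> (j.+1 <= u.-1)%N -> z j.+1 <= z j) /\
  z 1%N <= 1 /\
  z 1%N + z u <= 1.

(* Variables: x_1..x_n (inl i) and z_{i,1..4} (inr (i, j-1)). *)
Definition var (n : nat) := ('I_n + 'I_n * 'I_4)%type.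

Definition Pn (R : realType) (n : nat) (x : 'I_n -> R) : Prop :=
  (forall i, 0 <= x i <= 4) /\
  (forall S : {set 'I_n},
      2^-1 <= \sum_(i in S) x i + \sum_(i in ~: S) (4 - x i)).

Definition PnB (R : realType) (n : nat) : set (var n -> R) :=
  [set y | Pn (fun i => y (inl i)) /\
           forall i : 'I_n, Bo 4 (y (inl i)) (fun j => y (inr (i, inord j.-1)))].

From HB Require Import structures.
From mathcomp Require Import all_boot all_order all_algebra.
From mathcomp Require Import boolp classical_sets reals lra.
Set Implicit Arguments.
Unset Strict Implicit.
Unset Printing Implicit Defensive.
Import Order.TTheory GRing.Theory Num.Theory.
Local Open Scope classical_set_scope.
Local Open Scope ring_scope.

(* Branch on z_(i,1) <= 0 | z_(i,1) >= 1 for i = 1..n along a path, and below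
   its last node on z_(i,4) <= 0 | z_(i,4) >= 1 for all i: n + 2^n leaves.
   In a leaf of the second kind every z_(i,1) = 0 and z_(i,4) is 0 or 1, which
   forces x into {0,4}^n; these cube vertices violate P^n, so the leaf misses
   P^n_B.  In a leaf of the first kind z_(i,1) = 1 gives 1 <= x_i <= 3, which
   already implies all inequalities of P^n.  There only the blocks B^o(4)
   remain, each the convex hull of its five integer points, and decomposing
   one block at a time keeps some z_(j,1) = 1 on every point of positive
   weight; hence these leaves lie in conv of the integer points. *)

Section ConvexHull.
Variables (R : realType) (I : Type).
Implicit Types S : set (I -> R).

Lemma sub_conv S : S `<=` conv S.
Proof.
move=> y Sy; exists 1%N, (fun _ => y), (fun _ => 1).
by do 2!split=> //; split=> [|i]; rewrite big_ord1 ?mul1r.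
Qed.

Lemma conv_subset S S' : S `<=` S' -> conv S `<=` conv S'.
Proof.
move=> SS' y [m [p [w [Sp [w_ge0 [w_sum y_def]]]]]].
by exists m, p, w; split=> // k; apply: SS'.
Qed.

Lemma conv_convex S a b t y : conv S a -> conv S b -> 0 <= t <= 1 ->
  (forall i, y i = t * a i + (1 - t) * b i) -> conv S y.
Proof.
move=> [m1 [p1 [w1 [Sp1 [w1_ge0 [w1_sum a_def]]]]]].
move=> [m2 [p2 [w2 [Sp2 [w2_ge0 [w2_sum b_def]]]]]] /andP[t_ge0 t_le1] y_def.
pose p k := match split k with inl k1 => p1 k1 | inr k2 => p2 k2 end.
pose w k := match split k with inl k1 => t * w1 k1 | inr k2 => (1 - t) * w2 k2 end.
have splitl k1 : split (lshift m2 k1) = inl k1 := unsplitK (inl k1).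
have splitr k2 : split (rshift m1 k2) = inr k2 := unsplitK (inr k2).
exists (m1 + m2)%N, p, w; split; first by move=> k; rewrite /p; case: split.
split.
  by move=> k; rewrite /w; case: split => k'; rewrite mulr_ge0 // subr_ge0.
split.
  rewrite big_split_ord /w.
  under eq_bigr do rewrite splitl.
  under [X in _ + X = _]eq_bigr do rewrite splitr.
  by rewrite -!mulr_sumr w1_sum w2_sum !mulr1 subrKC.
move=> i; rewrite y_def a_def b_def big_split_ord /w /p.
under eq_bigr do rewrite splitl.
under [X in _ = _ + X]eq_bigr do rewrite splitr.
by rewrite !mulr_sumr; congr (_ + _); apply: eq_bigr => k _; rewrite mulrA.
Qed.

Lemma conv_comb S m (w : 'I_m -> R) (p : 'I_m -> I -> R) y :
  (forall k, 0 <= w k) -> \sum_(k < m) w k = 1 -> (forall k, conv S (p k)) ->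
  (forall i, y i = \sum_(k < m) w k * p k i) -> conv S y.
Proof.
elim: m w p y => [|m IH] w p y w_ge0; first by rewrite big_ord0 => /esym/eqP; rewrite oner_eq0.
rewrite big_ord_recr /=; set s := \sum_(k < m) _ => w_sum p_conv y_def.
have s_ge0 : 0 <= s by apply: sumr_ge0.
have wmax_ge0 := w_ge0 ord_max.
have [s0|s_neq0] := eqVneq s 0.
  have w0 k : w (widen_ord (leqnSn m) k) = 0 by apply: (psumr_eq0P _ s0).
  suff -> : y = p ord_max by [].
  apply/funext => i; rewrite y_def big_ord_recr /= big1 => [|k _]; last by rewrite w0 mul0r.
  by rewrite add0r (_ : w ord_max = 1) ?mul1r //; lra.
have s_gt0 : 0 < s by rewrite lt_def s_neq0.
pose y' i := \sum_(k < m) (w (widen_ord (leqnSn m) k) / s) * p (widen_ord (leqnSn m) k) i.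
have y'_conv : conv S y'.
  apply: (IH (fun k => w (widen_ord (leqnSn m) k) / s)) => [k||k|i] //.
  - by rewrite divr_ge0.
  - by rewrite -mulr_suml mulfV.
  - exact: p_conv.
apply: (conv_convex y'_conv (p_conv ord_max) (t := s)); first by apply/andP; split; lra.
move=> i; rewrite y_def big_ord_recr /= (_ : 1 - s = w ord_max); last by lra.
congr (_ + _); rewrite /y' mulr_sumr; apply: eq_bigr => k _.
by rewrite mulrA (mulrCA s) mulfV // mulr1.
Qed.

Lemma conv_idem S : conv (conv S) = conv S.
Proof.
apply/seteqP; split; last exact: sub_conv.
by move=> y [m [p [w [p_conv [w_ge0 [w_sum y_def]]]]]]; apply: conv_comb y_def.
Qed.

Lemma conv_comb_support S m (w : 'I_m -> R) (p : 'I_m -> I -> R) y :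
  (forall k, 0 <= w k) -> \sum_(k < m) w k = 1 ->
  (forall k, w k != 0 -> conv S (p k)) ->
  (forall i, y i = \sum_(k < m) w k * p k i) -> conv S y.
Proof.
move=> w_ge0 w_sum p_conv y_def.
have /existsP[k0 wk0] : [exists k, w k != 0].
  rewrite -negb_forall; apply/negP => /forallP w0.
  by move: w_sum; rewrite big1 => [/esym/eqP|k _]; [rewrite oner_eq0 | apply/eqP/w0].
apply: (conv_comb (p := fun k => if w k == 0 then p k0 else p k) w_ge0 w_sum).
  by move=> k; case: eqP => [_|/eqP]; apply: p_conv.
by move=> i; rewrite y_def; apply: eq_bigr => k _; case: eqP => [->|]; rewrite ?mul0r.
Qed.

End ConvexHull.

Section BlockBo4.
Variable R : realType.
Implicit Types (x : R) (z : nat -> R) (k : 'I_5).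

(* [z j] stands for the paper's z_(j+1). *)
Definition bo4 x z :=
  [/\ 0 <= z 2%N, z 2%N <= z 1%N, z 1%N <= z 0%N, z 0%N <= 1 &
      [/\ 0 <= z 3%N, z 0%N + z 3%N <= 1 & x = 4 * z 3%N + z 0%N + z 1%N + z 2%N]].

Lemma BoE x z : Bo 4 x z <-> bo4 x (fun j => z j.+1).
Proof.
have sum3 : \sum_(1 <= j < 4) z j = z 1%N + z 2%N + z 3%N.
  by rewrite big_ltn // big_ltn // big_ltn // big_geq // addr0 !addrA.
rewrite /Bo /bo4 sum3; split.
  move=> [z01 [-> [z3_ge0 [z_decr [z1_le1 z14_le1]]]]].
  have /andP[z4_ge0 _] := z01 4%N isT.
  by split=> //; [exact: z_decr 2%N isT isT | exact: z_decr 1%N isT isT | split=> //; lra].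
move=> [z3_ge0 z32 z21 z1_le1 [z4_ge0 z14_le1 ->]]; split.
  by move=> [|[|[|[|[|j]]]]] //= _; apply/andP; split; lra.
by split; [lra | split=> //; split=> // [[|[|[|j]]]]].
Qed.

(* The integer points of B^o(4): x = k, with z = (1^k, 0^(3-k), 0) for k < 4
   and z = (0, 0, 0, 1) for k = 4. *)
Definition bo4_vertex k : nat -> R :=
  fun j => if val k == 4%N then (j == 3%N)%:R else (j < k)%:R.

Definition bo4_weight z k : R :=
  match val k with
  | 0 => 1 - z 0%N - z 3%N | 1 => z 0%N - z 1%N | 2 => z 1%N - z 2%N
  | 3 => z 2%N | _ => z 3%N
  end.

Lemma bo4_vertexP k : bo4 (val k)%:R (bo4_vertex k).
Proof.
rewrite /bo4 /bo4_vertex.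
by case: k => [[|[|[|[|[|?]]]]] ?] //=; split; try lra; split; lra.
Qed.

Lemma bo4_weight_sum z : \sum_(k < 5) bo4_weight z k = 1.
Proof. by rewrite !big_ord_recl big_ord0 /bo4_weight /=; lra. Qed.

Lemma bo4_weight_ge0 x z k : bo4 x z -> 0 <= bo4_weight z k.
Proof.
move=> [z3_ge0 z32 z21 z1_le1 [z4_ge0 z14_le1 _]].
by case: k => [[|[|[|[|[|?]]]]] ?] //=; rewrite /bo4_weight /=; lra.
Qed.

Lemma bo4_weight_z z j : (j < 4)%N ->
  z j = \sum_(k < 5) bo4_weight z k * bo4_vertex k j.
Proof.
rewrite !big_ord_recl big_ord0 /bo4_weight /bo4_vertex /=.
by case: j => [|[|[|[|j]]]] //= _; lra.
Qed.

Lemma bo4_weight_x x z : bo4 x z -> x = \sum_(k < 5) bo4_weight z k * (val k)%:R.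
Proof.
move=> [_ _ _ _ [_ _ ->]].
by rewrite !big_ord_recl big_ord0 /bo4_weight /= /bump /=; lra.
Qed.

Lemma bo4_weight_face x z k : bo4 x z -> z 0%N = 1 -> bo4_weight z k != 0 ->
  bo4_vertex k 0 = 1.
Proof.
move=> [z3_ge0 z32 z21 z1_le1 [z4_ge0 z14_le1 _]] z1_eq1.
case: k => [[|[|[|[|[|?]]]]] ?] //=; rewrite /bo4_weight /= => /eqP[]; lra.
Qed.

Lemma bo4_bounds x z : bo4 x z -> 0 <= x <= 4 /\ forall j, (j < 4)%N -> 0 <= z j <= 1.
Proof.
move=> [z3_ge0 z32 z21 z1_le1 [z4_ge0 z14_le1 ->]].
split; first by apply/andP; split; lra.
by move=> [|[|[|[|j]]]] // _; apply/andP; split; lra.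
Qed.

Lemma bo4_face x z : bo4 x z -> z 0%N = 1 -> 1 <= x <= 3.
Proof.
by move=> [z3_ge0 z32 z21 z1_le1 [z4_ge0 z14_le1 ->]] z1_eq1; apply/andP; split; lra.
Qed.

Lemma bo4_corner x z : bo4 x z -> z 0%N <= 0 -> z 3%N <= 0 \/ 1 <= z 3%N ->
  x = 0 \/ x = 4.
Proof.
by move=> [z3_ge0 z32 z21 z1_le1 [z4_ge0 z14_le1 ->]] z1_le0 [z4|z4]; [left|right]; lra.
Qed.

End BlockBo4.

Section Pn.
Variables (R : realType) (n : nat).
Implicit Type x : 'I_n -> R.

Lemma Pn_interior x j : (forall i, 0 <= x i <= 4) -> 2^-1 <= x j <= 4 - 2^-1 -> Pn x.
Proof.
move=> x_box /andP[xj_lb xj_ub]; split=> // S.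
have sum_ge0 (P : pred 'I_n) : 0 <= \sum_(i | P i) x i.
  by apply: sumr_ge0 => i _; case/andP: (x_box i).
have sumC_ge0 (P : pred 'I_n) : 0 <= \sum_(i | P i) (4 - x i).
  by apply: sumr_ge0 => i _; case/andP: (x_box i); rewrite subr_ge0.
have [jS|jNS] := boolP (j \in S).
  rewrite (bigD1 j) //=.
  by have := sum_ge0 (fun i => (i \in S) && (i != j)); have := sumC_ge0 (mem (~: S)); lra.
rewrite [X in _ + X](bigD1 j) ?inE //=.
by have := sum_ge0 (mem S); have := sumC_ge0 (fun i => (i \in ~: S) && (i != j)); lra.
Qed.

Lemma Pn_no_cube_vertex x : Pn x -> ~ (forall i, x i = 0 \/ x i = 4).
Proof.
move=> [_ Pn_S] x_vertex.
have := Pn_S [set i | x i == 0]%SET.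
rewrite big1 => [|i]; last by rewrite inE => /eqP.
rewrite big1 => [|i]; first lra.
by rewrite !inE; case: (x_vertex i) => ->; rewrite ?eqxx // subrr.
Qed.

End Pn.

Section BBTree.
Variables (R : realType) (I : Type).
Implicit Types (L N Q : set (I -> R)) (T : bbtree I).

Lemma bb_leaves_sub L T N : N \in bb_leaves L T -> N `<=` L.
Proof.
elim: T L => [|i t l IHl r IHr] L /=; first by rewrite inE => /eqP->.
by rewrite mem_cat => /orP[/IHl|/IHr] NL y /NL [].
Qed.

Lemma bb_leaves_cover L T y : L y -> (forall i, exists z : int, y i = z%:~R) ->
  exists2 N, N \in bb_leaves L T & N y.
Proof.
move=> Ly y_int; elim: T L Ly => [|i t l IHl r IHr] L Ly /=.
  by exists L; rewrite ?inE.
have [z yi] := y_int i.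
have [z_le|z_gt] := lerP z t.
  have [|N N_leaf Ny] := IHl (L `&` [set y | y i <= t%:~R]).
    by split=> //=; rewrite yi ler_int.
  by exists N; rewrite ?mem_cat ?N_leaf.
have [|N N_leaf Ny] := IHr (L `&` [set y | (t + 1)%:~R <= y i]).
  by split=> //=; rewrite yi ler_int lezD1.
by exists N; rewrite ?mem_cat ?N_leaf ?orbT.
Qed.

Lemma leaves_capE (Ls : seq (set (I -> R))) Q :
  leaves_cap Ls Q = [set y | exists2 N, N \in Ls & (N `&` Q) y].
Proof.
apply/seteqP; split=> y.
  by move=> [k k_lt NQy]; exists (nth set0 Ls k); rewrite ?mem_nth.
by move=> [N /(nthP set0)[k k_lt <-] NQy]; exists k.
Qed.

End BBTree.

Section PnB.
Variables (R : realType) (n : nat).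
Notation V := (var n).
Implicit Types (y : V -> R) (i : 'I_n) (k : 'I_5) (L N : set (V -> R)).

Definition xv i : V := inl i.
Definition zv i (j : nat) : V := inr (i, inord j).

Lemma zv_val i (j : 'I_4) : zv i j = inr (i, j).
Proof. by rewrite /zv inord_val. Qed.

Definition block_z y i : nat -> R := fun j => y (zv i j).
Definition block y i := bo4 (y (xv i)) (block_z y i).

Lemma PnBE y : PnB y <-> Pn (fun i => y (xv i)) /\ forall i, block y i.
Proof.
split=> -[Pn_y By]; split=> // i; last exact/BoE/By.
exact: (BoE _ (fun j => y (inr (i, inord j.-1)))).1 (By i).
Qed.

Lemma PnB_sub_box : @PnB R n `<=` [set y | forall v, 0 <= y v <= 4].
Proof.
move=> y /PnBE[_ By] [i|[i j]]; first by have [] := bo4_bounds (By i).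
have [_ z_bounds] := bo4_bounds (By i).
have /andP[z_ge0 z_le1] : 0 <= y (zv i j) <= 1 by exact: z_bounds.
by rewrite -zv_val; apply/andP; split; lra.
Qed.

Definition var_block (v : V) : 'I_n := match v with inl i => i | inr (i, _) => i end.

Definition vertex_coord k (v : V) : R :=
  match v with inl _ => (val k)%:R | inr (_, j) => bo4_vertex R k j end.

Lemma vertex_coord_int k v : vertex_coord k v \is a Num.int.
Proof.
case: v => [_|[_ j]] /=; first exact: natr_int.
by rewrite /bo4_vertex; case: ifP => _; apply: natr_int.
Qed.

Definition set_block y i k : V -> R :=
  fun v => if var_block v == i then vertex_coord k v else y v.

Lemma set_block_out y i k v : var_block v != i -> set_block y i k v = y v.
Proof. by rewrite /set_block => /negbTE->. Qed.

Lemma block_set_block y i k : block (set_block y i k) i.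
Proof.
by rewrite /block /block_z /set_block /= eqxx /bo4 !inordK //; apply: bo4_vertexP.
Qed.

Lemma block_set_block_out y i k i' : i' != i -> block (set_block y i k) i' = block y i'.
Proof. by move=> /negbTE ne; rewrite /block /block_z /set_block /= ne. Qed.

Lemma set_block_decomp y i : block y i ->
  forall v, y v = \sum_(k < 5) bo4_weight (block_z y i) k * set_block y i k v.
Proof.
move=> By v; have [v_in|v_out] := eqVneq (var_block v) i; last first.
  under eq_bigr do rewrite set_block_out //.
  by rewrite -mulr_suml bo4_weight_sum mul1r.
rewrite /set_block v_in eqxx; case: v v_in => [_|[_ j]] /= ->; first exact: bo4_weight_x By.
by rewrite -zv_val; apply: bo4_weight_z.
Qed.

Definition z1_face : set (V -> R) :=
  [set y | (forall i, block y i) /\ exists i, y (zv i 0) = 1].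

Lemma z1_face_sub_PnB : z1_face `<=` @PnB R n.
Proof.
move=> y [By [j yj]]; apply/PnBE; split=> //.
have /andP[xj_ge1 xj_le3] := bo4_face (By j) yj.
apply: (Pn_interior (j := j)) => [i|]; first by have [] := bo4_bounds (By i).
by apply/andP; split; lra.
Qed.

Lemma z1_face_set_block y i k : z1_face y -> bo4_weight (block_z y i) k != 0 ->
  z1_face (set_block y i k).
Proof.
move=> [By [j yj]] wk; split=> [i'|].
  by have [->|ne] := eqVneq i' i; [apply: block_set_block | rewrite block_set_block_out].
have [ji|ne] := eqVneq j i; last by exists j; rewrite set_block_out.
subst j; exists i; rewrite /set_block eqxx /= inordK //.
exact: bo4_weight_face (By i) yj wk.
Qed.

Lemma z1_face_conv_int (s : seq 'I_n) y : z1_face y ->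
  (forall v, var_block v \notin s -> y v \is a Num.int) -> conv (int_points (@PnB R n)) y.
Proof.
elim: s y => [|i s IH] y y_face y_int.
  by apply: sub_conv; split=> [|v]; [apply: z1_face_sub_PnB | apply/intrP/y_int].
have Byi := y_face.1 i.
apply: (conv_comb_support _ (bo4_weight_sum _) _ (set_block_decomp Byi)) => k.
  exact: bo4_weight_ge0 Byi.
move=> wk; apply: IH; first exact: z1_face_set_block.
move=> v v_out; rewrite /set_block; case: eqP => [_|/eqP vi]; first exact: vertex_coord_int.
by apply: y_int; rewrite inE negb_or vi.
Qed.

Lemma z1_face_conv : z1_face `<=` conv (int_points (@PnB R n)).
Proof.
by move=> y y_face; apply: (z1_face_conv_int (s := enum 'I_n)) => // v; rewrite mem_enum.
Qed.

Fixpoint split_z4 (s : seq 'I_n) : bbtree V :=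
  if s is i :: s' then BBNode (zv i 3) 0 (split_z4 s') (split_z4 s') else BBLeaf.

Fixpoint split_z1 (s : seq 'I_n) : bbtree V :=
  if s is i :: s' then BBNode (zv i 0) 0 (split_z1 s') BBLeaf else split_z4 (enum 'I_n).

Lemma size_split_z4 L s : size (bb_leaves L (split_z4 s)) = (2 ^ size s)%N.
Proof. by elim: s L => [|i s IH] L //=; rewrite size_cat !IH expnS mul2n addnn. Qed.

Lemma size_split_z1 L s : size (bb_leaves L (split_z1 s)) = (size s + 2 ^ n)%N.
Proof.
elim: s L => [|i s IH] L /=; first by rewrite size_split_z4 size_enum_ord.
by rewrite size_cat IH addn1.
Qed.

Lemma split_z4_leaves L s N : N \in bb_leaves L (split_z4 s) ->
  N `<=` [set y | forall i, i \in s -> y (zv i 3) <= 0 \/ 1 <= y (zv i 3)].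
Proof.
elim: s L => [|i s IH] L /=; first by [].
rewrite mem_cat => /orP[] N_leaf y Ny i'; rewrite inE => /orP[/eqP->|i's].
- by have [_ /= ?] := bb_leaves_sub N_leaf Ny; left.
- exact: IH N_leaf y Ny i' i's.
- by have [_ /= ?] := bb_leaves_sub N_leaf Ny; right.
- exact: IH N_leaf y Ny i' i's.
Qed.

Lemma split_z1_leaves L s N : N \in bb_leaves L (split_z1 s) ->
  (exists2 i, i \in s & N `<=` [set y | 1 <= y (zv i 0)]) \/
  N `<=` [set y | forall i,
    (i \in s -> y (zv i 0) <= 0) /\ (y (zv i 3) <= 0 \/ 1 <= y (zv i 3))].
Proof.
elim: s L => [|i s IH] L /=.
  move=> /split_z4_leaves N_z4; right=> y /N_z4 y_z4 i.
  by split=> //; apply: y_z4; rewrite mem_enum.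
rewrite mem_cat inE => /orP[N_leaf|/eqP->]; last first.
  by left; exists i; rewrite ?inE ?eqxx // => y [_]; rewrite /= add0r.
case: (IH _ N_leaf) => [[i' i's N_i']|N_z]; first by left; exists i'; rewrite // inE i's orbT.
right=> y Ny i'; have [N_s N_z4] := N_z y Ny i'; split=> // /[!inE] /orP[/eqP->|/N_s//].
by have [_] := bb_leaves_sub N_leaf Ny.
Qed.

Lemma split_z1_leaves_face L N : N \in bb_leaves L (split_z1 (enum 'I_n)) ->
  N `&` @PnB R n `<=` z1_face.
Proof.
move=> /split_z1_leaves[[i _ N_i] y [Ny /PnBE[_ By]]|N_z y [Ny /PnBE[Pn_y By]]].
  split=> //; exists i.
  have [_ _ _ zi_le1 _] := By i; have zi_ge1 : 1 <= y (zv i 0) := N_i y Ny.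
  by rewrite /block_z in zi_le1; lra.
exfalso; apply: (Pn_no_cube_vertex Pn_y) => i.
have [zi_le0 zi3] := N_z y Ny i.
exact: bo4_corner (By i) (zi_le0 (mem_enum _ _)) zi3.
Qed.

End PnB.

Theorem proposition6 (R : realType) (n : nat) (hn : (1 <= n)%N) :
  exists (D : set (var n -> R)) (T : bbtree (var n)),
    complete_bbtree (@PnB R n) D T /\ bb_size D T = (2 ^ n + n)%N.
Proof.
pose D : set (var n -> R) := [set y | forall v, 0 <= y v <= 4].
pose T := split_z1 (enum 'I_n).
exists D, T; split; last by rewrite /bb_size size_split_z1 size_enum_ord addnC.
split; first by exists (fun _ => 0), (fun _ => 4).
split; first exact: PnB_sub_box.
rewrite leaves_capE; apply/seteqP; split.
  apply: conv_subset => y [PnB_y y_int].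
  have [N N_leaf Ny] := bb_leaves_cover T (PnB_sub_box PnB_y) y_int.
  by exists N.
rewrite -[X in _ `<=` X]conv_idem; apply: conv_subset => y [N N_leaf NPy].
exact/z1_face_conv/(split_z1_leaves_face N_leaf).
Qed.
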